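(* Assume $\mathrm{recc}(C)\subseteq\mathrm{recc}(P^B)$. Let $D\subseteq N_1\cup N_2$ and fix $\hat x\in P^B$. Then the set function $f:2^{M_D}\to\mathbb{R}$ given by $$f(S)=\sum_{j\in S}\frac{\hat x_j}{\alpha_j}-\sum_{j\in N\setminus D}\frac{\hat x_j}{\varepsilon_j(S)}$$ is supermodular. Hence the problem $\max_{S\subseteq M_D}f(S)$ is a supermodular maximization problem.
   Context: Let $A\in\mathbb{R}^{m\times n}$ have full row rank, $b\in\mathbb{R}^m$, and $P=\{x\in\mathbb{R}^n_+:Ax=b\}$. Let $C\subseteq\mathbb{R}^n$ be an open convex set. Fix a basis $B$ of $P$ with nonbasic set $N=\{1,\dots,n\}\setminus B$. Write $P=\{x:x_i=\bar b_i-\sum_{j\in N}\bar a_{ij}x_j\ (i\in B),\ x\ge0\}$ with $\bar b\ge0$. The basic solution $\bar x$ has $\bar x_i=\bar b_i$ ($i\in B$) and $0$ ($i\in N$). $P^B$ is obtained by dropping $x_i\ge0$ for $i\in B$. For $j\in N$, $\bar r^j$ has $\bar r^j_k=-\bar a_{kj}$ ($k\in B$), $\bar r^j_j=1$, and $0$ otherwise. Thus $P^B=\{\bar x+\sum_{j\in N}x_j\bar r^j:x_j\ge0\}$, so $\hat x_j\ge0$ for $j\in N$. It is assumed that $\bar x\notin\mathrm{cl}(C)$. For $j\in N$, $\alpha_j=\inf\{\lambda\ge0:\bar x+\lambda\bar r^j\in C\}$ and $\beta_j=\sup\{\lambda\ge0:\bar x+\lambda\bar r^j\in C\}$, with $\alpha_j=+\infty$,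 $\beta_j=-\infty$ if the halfline misses $C$. Define - $N_1=\{j:\alpha_j\in(0,\infty),\beta_j=+\infty\}$; - $N_2=\{j:\alpha_j\in(0,\infty),\beta_j\in(\alpha_j,\infty)\}$. For a set $K$, $\mathrm{recc}(K)=\{d:x+\lambda d\in K\ \forall x\in K,\lambda\ge0\}$. We use the convention $t/+\infty=0$. $G_D^C=\{\bar x\}+\mathrm{conv}\big(\bigcup_{j\in D}\{\lambda\bar r^j:\lambda>\alpha_j\}\big)+\mathrm{recc}(C)$. For $(i,j)\in D\times(N\setminus D)$, $\gamma_{ij}=\sup\{\gamma\ge0:\alpha_i\bar r^i+\gamma\bar r^j\in\mathrm{recc}(G_D^C)\}$. Let $M_D=\{i\in D:\gamma_{ij}>0\ \forall j\in N\setminus D\}$. Finally, $\varepsilon_j(S)=\min_{i\in S}\gamma_{ij}$ for $S\neq\emptyset$ and $\varepsilon_j(\emptyset)=+\infty$. *)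

From HB Require Import structures.
From mathcomp Require Import all_boot all_order all_algebra.
From mathcomp Require Import all_classical all_reals all_analysis.
Set Implicit Arguments. Unset Strict Implicit. Unset Printing Implicit Defensive.
Import Order.TTheory GRing.Theory Num.Theory numFieldNormedType.Exports.
Local Open Scope classical_set_scope.
Local Open Scope ring_scope.

(* Vectors of R^n are column vectors 'cV[R]_n; coordinate k of x is x k 0. *)
Section Defs.
Variables (R : realType) (m n : nat).
Implicit Types (A : 'M[R]_(m, n)) (b : 'cV[R]_m) (B D S : {set 'I_n}).

Definition polyP A b : set 'cV[R]_n :=
  [set x | A *m x = b /\ forall k, 0 <= x k 0].

(* B is a basis: |B| = m and the columns of A indexed by B are linearly
   independent (so the m x m submatrix A_B is invertible). *)
Definition is_basis A B : Prop :=
  #|B| = m /\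
  forall x : 'cV[R]_n, (forall k, k \notin B -> x k 0 = 0) ->
    A *m x = 0 -> x = 0.

(* basic solution: xbar_N = 0 and A xbar = b, i.e. xbar_B = A_B^{-1} b = bbar *)
Definition xbar A b B : 'cV[R]_n :=
  xget 0 [set x | A *m x = b /\ forall k, k \notin B -> x k 0 = 0].

Definition is_basis_of_P A b B : Prop :=
  is_basis A B /\ forall k, 0 <= xbar A b B k 0.

(* rbar^j: rbar^j_j = 1, rbar^j_k = 0 for k in N\{j}, rbar^j_B = -abar_{.j},
   equivalently A rbar^j = 0. *)
Definition rbar A B (j : 'I_n) : 'cV[R]_n :=
  xget 0 [set r | A *m r = 0 /\ r j 0 = 1 /\
                  forall k, k \notin B -> k != j -> r k 0 = 0].

Definition polyPB A b B : set 'cV[R]_n :=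
  [set x | A *m x = b /\ forall k, k \notin B -> 0 <= x k 0].

Definition recc (K : set 'cV[R]_n) : set 'cV[R]_n :=
  [set d | forall x, K x -> forall lam : R, 0 <= lam -> K (x + lam *: d)].

Definition conv_hull (K : set 'cV[R]_n) : set 'cV[R]_n :=
  [set x | exists (k : nat) (p : 'I_k -> 'cV[R]_n) (w : 'I_k -> R),
     (forall i, K (p i)) /\ (forall i, 0 <= w i) /\ \sum_i w i = 1 /\
     x = \sum_i w i *: p i].

Variables (A : 'M[R]_(m, n)) (b : 'cV[R]_m) (B : {set 'I_n})
          (C : set 'cV[R]_n).

Definition alpha (j : 'I_n) : \bar R :=
  ereal_inf [set lam%:E | lam in [set lam : R | 0 <= lam /\
                          C (xbar A b B + lam *: rbar A B j)]].

Definition beta (j : 'I_n) : \bar R :=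
  ereal_sup [set lam%:E | lam in [set lam : R | 0 <= lam /\
                          C (xbar A b B + lam *: rbar A B j)]].

Definition N1 : {set 'I_n} :=
  [set j | (j \notin B) && [&& (0 < alpha j)%E, (alpha j < +oo)%E &
                              (beta j == +oo)%E]].

Definition N2 : {set 'I_n} :=
  [set j | (j \notin B) && [&& (0 < alpha j)%E, (alpha j < +oo)%E,
                              (alpha j < beta j)%E & (beta j < +oo)%E]].

Definition G_DC (D : {set 'I_n}) : set 'cV[R]_n :=
  [set x | exists u v,
     conv_hull [set y | exists2 j, j \in D &
                  exists2 lam : R, (alpha j < lam%:E)%E & y = lam *: rbar A B j] u
     /\ recc C v /\ x = xbar A b B + u + v].

Definition gamma (D : {set 'I_n}) (i j : 'I_n) : \bar R :=
  ereal_sup [set g%:E | g in [set g : R | 0 <= g /\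
     recc (G_DC D) (fine (alpha i) *: rbar A B i + g *: rbar A B j)]].

Definition M_D (D : {set 'I_n}) : {set 'I_n} :=
  [set i in D | [forall j, (j \notin B) && (j \notin D) ==> (0 < gamma D i j)%E]].

Definition eps (D S : {set 'I_n}) (j : 'I_n) : \bar R :=
  \big[Order.min/+oo%E]_(i in S) gamma D i j.

End Defs.

(* t / e for e in \bar R, with the convention t / +oo = 0 *)
Definition ediv {R : realType} (t : R) (e : \bar R) : R :=
  if e is +oo%E then 0 else t / fine e.

Definition f_obj {R : realType} {m n : nat} (A : 'M[R]_(m, n)) (b : 'cV[R]_m)
  (B : {set 'I_n}) (C : set 'cV[R]_n) (D : {set 'I_n}) (xhat : 'cV[R]_n)
  (S : {set 'I_n}) : R :=
  (\sum_(j in S) xhat j 0 / fine (alpha A b B C j)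
   - \sum_(j | (j \notin B) && (j \notin D)) ediv (xhat j 0) (eps A b B C D S j))%R.

From HB Require Import structures.
From mathcomp Require Import all_boot all_order all_algebra.
From mathcomp Require Import all_classical all_reals all_analysis.
From mathcomp Require Import lra.
Import Order.TTheory GRing.Theory Num.Theory numFieldNormedType.Exports.
Local Open Scope classical_set_scope.
Local Open Scope ring_scope.

(* For i in M_D every gamma_ij is positive, hence so is eps_j(S) for S inside
   M_D.  The first sum of f is modular.  For the second, eps_j(S :|: T) is the
   minimum and eps_j(S :&: T) at least the maximum of eps_j(S) and eps_j(T); as
   t |-> xhat_j / t is nonincreasing on (0, +oo] and xhat_j >= 0 for j in N,
   each term xhat_j / eps_j(.) is submodular, so f is supermodular. *)

Lemma big_setUI {R : Type} {idx : R} (op : Monoid.com_law idx) {I : finType}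
    (X Y : {set I}) (F : I -> R) :
  op (\big[op/idx]_(i in X :|: Y) F i) (\big[op/idx]_(i in X :&: Y) F i) =
  op (\big[op/idx]_(i in X) F i) (\big[op/idx]_(i in Y) F i).
Proof.
rewrite (@big_setID _ _ _ _ (X :|: Y) X) finset.setUK finset.setDUl.
rewrite finset.setDv finset.set0U [in RHS](@big_setID _ _ _ _ Y X).
by rewrite (finset.setIC Y X) Monoid.mulmAC Monoid.mulmA.
Qed.

Lemma lerD_nhomo_min_max {d} {T : orderType d} {R : numDomainType}
    {P : {pred T}} {g : T -> R} :
  {in P &, {homo g : a b /~ (a <= b)%O}} ->
  forall x y u v, x \in P -> y \in P -> u \in P -> v \in P ->
  (Order.min x y <= u)%O -> (Order.max x y <= v)%O -> g u + g v <= g x + g y.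
Proof.
move=> g_nhomo x y u v Px Py Pu Pv.
wlog le_xy : x y Px Py / (x <= y)%O => [hwlog|].
  case/orP: (le_total x y) => [|le_yx]; first exact: hwlog.
  by rewrite minC maxC [g x + _]addrC; apply: hwlog.
rewrite (min_idPl le_xy) (max_idPr le_xy) => le_xu le_yv.
by rewrite lerD // g_nhomo.
Qed.

Lemma ediv_nhomo {R : realType} {t : R} : 0 <= t ->
  {in [pred e : \bar R | (0 < e)%E] &, {homo ediv t : e1 e2 /~ (e1 <= e2)%O}}.
Proof.
move=> t_ge0 e2 e1; rewrite !inE.
case: e1 => [r1| |]; case: e2 => [r2| |] //=; rewrite ?lte_fin ?lee_fin.
- move=> r2_gt0 r1_gt0 le_r12.
  by rewrite ler_pdivlMr // mulrAC ler_pdivrMr // ler_wpM2l.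
- by move=> _ r1_gt0 _; rewrite divr_ge0 // ltW.
Qed.

Section Supermodularity.
Context {R : realType} {m n : nat} {A : 'M[R]_(m, n)} {b : 'cV[R]_m}.
Context {B : {set 'I_n}} {C : set 'cV[R]_n} {D : {set 'I_n}}.
Implicit Types (S T : {set 'I_n}) (j : 'I_n).

Local Notation M_D := (M_D A b B C D).
Local Notation eps := (eps A b B C D).

Lemma eps_gt0 S j :
  S \subset M_D -> j \notin B -> j \notin D -> (0 < eps S j)%E.
Proof.
move=> sSM jB jD; apply: lt_bigmin => // i /(fintype.subsetP sSM).
by rewrite inE => /andP[_ /forallP/(_ j)]; rewrite jB jD.
Qed.

Lemma ediv_eps_submodular (t : R) S T j :
  0 <= t -> S \subset M_D -> T \subset M_D -> j \notin B -> j \notin D ->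
  ediv t (eps (S :|: T) j) + ediv t (eps (S :&: T) j) <=
  ediv t (eps S j) + ediv t (eps T j).
Proof.
move=> t_ge0 sSM sTM jB jD.
have sUM : S :|: T \subset M_D by rewrite finset.subUset sSM.
have sIM : S :&: T \subset M_D.
  exact: fintype.subset_trans (finset.subsetIl S T) sSM.
apply: (lerD_nhomo_min_max (ediv_nhomo t_ge0)); rewrite ?inE ?eps_gt0 //.
- by rewrite /eps bigminU.
- by rewrite ge_max bigminIl bigminIr.
Qed.

Lemma sum_ediv_eps_submodular (x : 'I_n -> R) S T :
  (forall j, j \notin B -> 0 <= x j) -> S \subset M_D -> T \subset M_D ->
  \sum_(j | (j \notin B) && (j \notin D)) ediv (x j) (eps (S :|: T) j) +
  \sum_(j | (j \notin B) && (j \notin D)) ediv (x j) (eps (S :&: T) j) <=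
  \sum_(j | (j \notin B) && (j \notin D)) ediv (x j) (eps S j) +
  \sum_(j | (j \notin B) && (j \notin D)) ediv (x j) (eps T j).
Proof.
move=> x_ge0 sSM sTM; rewrite -!big_split /=.
apply: ler_sum => j /andP[jB jD].
by apply: ediv_eps_submodular => //; apply: x_ge0.
Qed.

End Supermodularity.

Theorem proposition3 (R : realType) (m n : nat) (A : 'M[R]_(m, n))
  (b : 'cV[R]_m) (C : set 'cV[R]_n) (B : {set 'I_n}) (D : {set 'I_n})
  (xhat : 'cV[R]_n) :
  \rank A = m ->
  open C -> convex_set C ->
  is_basis_of_P A b B ->
  ~ closure C (xbar A b B) ->
  recc C `<=` recc (polyPB A b B) ->
  D \subset N1 A b B C :|: N2 A b B C ->
  polyPB A b B xhat ->
  forall S T : {set 'I_n},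
    S \subset M_D A b B C D -> T \subset M_D A b B C D ->
    f_obj A b B C D xhat S + f_obj A b B C D xhat T <=
    f_obj A b B C D xhat (S :|: T) + f_obj A b B C D xhat (S :&: T).
Proof.
move=> _ _ _ _ _ _ _ [_ xhat_ge0] S T sSM sTM; rewrite /f_obj.
have /= linear_modular :=
  big_setUI +%R S T (fun j => xhat j 0 / fine (alpha A b B C j)).
have penalty_submodular :=
  sum_ediv_eps_submodular (fun j => xhat j 0) S T xhat_ge0 sSM sTM.
lra.
Qed.
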